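(* Let $\mathbf C$ and $\mathbf D$ be minimal clone $\tau$-algebras and let $\mathbf E=\mathbf C\times\mathbf D$ be their direct product as clone $\tau$-algebras. The following are equivalent: (1) $\mathbf E$ is minimal; (2) the varieties $\mathrm{Var}(\mathbf C_\tau)$ and $\mathrm{Var}(\mathbf D_\tau)$ are independent; (3) $\mathrm{Clo}\,\mathbf E_\tau=R_{\mathbf E}$. If these conditions hold, then $\mathrm{Var}(\mathbf E_\tau)=\mathrm{Var}(\mathbf C_\tau)\times\mathrm{Var}(\mathbf D_\tau)=\mathrm{Var}(\mathbf C_\tau)\vee\mathrm{Var}(\mathbf D_\tau)$, where the join is taken in the lattice of subvarieties of $\mathrm{Var}(\mathbf E_\tau)$.
   Context: A clone $\tau$-algebra is an algebra $\mathbf C=(C,\sigma^{\mathbf C}\ (\sigma\in\tau),q_n^{\mathbf C}\ (n\ge0),\mathsf e_i^{\mathbf C}\ (i\ge1))$ with $\mathsf e_i$ nullary, $q_n$ of arity $n+1$, satisfying: (C1) $q_n(\mathsf e_i,x_1,\dots,x_n)=x_i$ ($1\le i\le n$); (C2) $q_n(\mathsf e_j,x_1,\dots,x_n)=\mathsf e_j$ ($j>n$); (C3) $q_n(x,\mathsf e_1,\dots,\mathsf e_n)=x$; (C4) $q_k(x,y_1,\dots,y_k)=q_n(x,y_1,\dots,y_k,\mathsf e_{k+1},\dots,\mathsf e_n)$ ($n>k$); (C5) $q_n(q_n(x,\mathbf y),\mathbf z)=q_n(x,q_n(y_1,\mathbf z),\dots,q_n(y_n,\mathbf z))$; (C6)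 $q_n(\sigma(x_1,\dots,x_k),\mathbf y)=\sigma(q_n(x_1,\mathbf y),\dots,q_n(x_k,\mathbf y))$ for $\sigma\in\tau$ of arity $k$. $\mathbf C_\tau=(C,\sigma^{\mathbf C})_{\sigma\in\tau}$ is its $\tau$-reduct. $\mathbf C$ is minimal if $C$ is the smallest subset containing all $\mathsf e_i^{\mathbf C}$ and closed under all $\sigma^{\mathbf C}$. An element $a$ is independent of $\mathsf e_n$ if $q_n(a,\mathsf e_1,\dots,\mathsf e_{n-1},\mathsf e_{n+1})=a$; its dimension is the largest $n$ it depends on ($0$ if none). A function $f:E^k\to E$ is $\mathbf E$-representable if $f(\mathsf e_1,\dots,\mathsf e_k)$ has dimension $\le k$ and $f(a_1,\dots,a_k)=q_k(f(\mathsf e_1,\dots,\mathsf e_k),a_1,\dots,a_k)$ for all $a_i$; $R_{\mathbf E}$ is the set of these. $\mathrm{Clo}\,\mathbf E_\tau$ is the clone of term operations of $\mathbf E_\tau$ (smallest set of finitary operations, nullary included, containing projections and the basic operations, closed under composition and under restriction, i.e. dropping a last argument on which the operation does not depend). Subvarieties $\mathcal V_1,\mathcal V_2$ of type $\tau$ are independent if there is a $\tau$-term $t(v_1,v_2)$ with $\mathcal V_1\models t(v_1,v_2)=v_1$ and $\mathcal V_2\models t(v_1,v_2)=v_2$. The product of varieties is $\mathcal V_1\times\mathcal V_2=\{\mathbf A: \mathbf A\cong\mathbf A_1\times\mathbf A_2,\ \mathbf A_i\in\mathcal V_i\}$. *)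

From mathcomp Require Import all_boot.
Set Implicit Arguments.
Unset Strict Implicit.
Unset Printing Implicit Defensive.

Record sig := Sig { sym : Type; ar : sym -> nat }.

Inductive term (tau : sig) (X : Type) : Type :=
  | TVar : X -> term tau X
  | TApp : forall f : sym tau, ('I_(ar f) -> term tau X) -> term tau X.
Arguments TVar {tau X}.
Arguments TApp {tau X}.

Record algebra (tau : sig) := Alg {
  carrier :> Type;
  op : forall f : sym tau, ('I_(ar f) -> carrier) -> carrier }.
Arguments op {tau}.

Fixpoint eval (tau : sig) (A : algebra tau) (X : Type) (v : X -> A)
  (t : term tau X) : A :=
  match t with
  | TVar x => v x
  | TApp f args => op A f (fun i => eval v (args i))
  end.

Definition sat (tau : sig) (A : algebra tau) (X : Type) (s t : term tau X) : Prop :=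
  forall v : X -> A, eval v s = eval v t.

Definition aclass (tau : sig) := algebra tau -> Prop.

Definition csat (tau : sig) (K : aclass tau) (X : Type) (s t : term tau X) : Prop :=
  forall B, K B -> sat B s t.

Definition ident (tau : sig) := (term tau nat * term tau nat)%type.

Definition Mod (tau : sig) (Sig : ident tau -> Prop) : aclass tau :=
  fun B => forall st, Sig st -> sat B st.1 st.2.

(* The variety generated by a class K (= Mod Id K, Birkhoff). *)
Definition VarK (tau : sig) (K : aclass tau) : aclass tau :=
  Mod (fun st : ident tau => csat K st.1 st.2).

Definition Var (tau : sig) (A : algebra tau) : aclass tau :=
  Mod (fun st : ident tau => sat A st.1 st.2).

Definition independent (tau : sig) (V1 V2 : aclass tau) : Prop :=
  exists t : term tau bool,
    csat V1 t (TVar false) /\ csat V2 t (TVar true).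
(* variable v1 is [false], variable v2 is [true] *)

Definition prod_alg (tau : sig) (A1 A2 : algebra tau) : algebra tau :=
  @Alg tau (A1 * A2)%type
    (fun f args => (op A1 f (fun i => (args i).1), op A2 f (fun i => (args i).2))).

Definition iso (tau : sig) (A B : algebra tau) : Prop :=
  exists (h : A -> B) (g : B -> A),
    cancel h g /\ cancel g h /\
    forall f (args : 'I_(ar f) -> A), h (op A f args) = op B f (fun i => h (args i)).

Definition prodV (tau : sig) (V1 V2 : aclass tau) : aclass tau :=
  fun A => exists A1 A2, V1 A1 /\ V2 A2 /\ iso A (prod_alg A1 A2).

Definition joinV (tau : sig) (V1 V2 : aclass tau) : aclass tau :=
  VarK (fun B => V1 B \/ V2 B).

Definition same_class (tau : sig) (V W : aclass tau) : Prop :=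
  forall B, V B <-> W B.

Definition snoc (T : Type) (k : nat) (a : 'I_k -> T) (b : T) : 'I_k.+1 -> T :=
  fun i => match unlift ord_max i with Some j => a j | None => b end.

(* Clo A: smallest set of finitary operations (nullary included) containing
   the projections and basic operations, closed under composition and
   restriction (dropping a last argument the operation does not depend on). *)
Inductive Clo (tau : sig) (A : algebra tau) : forall k : nat, (('I_k -> A) -> A) -> Prop :=
  | Clo_proj : forall k (i : 'I_k), @Clo tau A k (fun a => a i)
  | Clo_basic : forall f : sym tau, @Clo tau A (ar f) (op A f)
  | Clo_comp : forall n k (g : ('I_n -> A) -> A) (h : 'I_n -> ('I_k -> A) -> A),
      @Clo tau A n g -> (forall i, @Clo tau A k (h i)) -> @Clo tau A k (fun a => g (fun i => h i a))
  | Clo_restr : forall k (g : ('I_k.+1 -> A) -> A) (f : ('I_k -> A) -> A),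
      @Clo tau A k.+1 g -> (forall a b, f a = g (snoc a b)) -> @Clo tau A k f.
Arguments Clo {tau} A {k} f.

(* Index convention: [ce i] stands for e_(i+1) (so e_1 = ce 0). *)
Record cloneAlg (tau : sig) := CloneAlg {
  cc : Type;
  cop : forall f : sym tau, ('I_(ar f) -> cc) -> cc;
  cq : forall n : nat, cc -> ('I_n -> cc) -> cc;
  ce : nat -> cc }.
Arguments cop {tau}.
Arguments cq {tau}.
Arguments ce {tau}.

Definition pad (tau : sig) (C : cloneAlg tau) (k n : nat) (y : 'I_k -> cc C) : 'I_n -> cc C :=
  fun i => match (insub (val i) : option 'I_k) with Some j => y j | None => ce C i end.
Arguments pad {tau} C {k} n y.

Definition is_clone (tau : sig) (C : cloneAlg tau) : Prop :=
  (forall n (x : 'I_n -> cc C) (i : 'I_n), cq C n (ce C i) x = x i) /\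
  (forall n (x : 'I_n -> cc C) (j : nat), n <= j -> cq C n (ce C j) x = ce C j) /\
  (forall n (x : cc C), cq C n x (fun i => ce C i) = x) /\
  (forall k n (x : cc C) (y : 'I_k -> cc C), k < n ->
                 cq C k x y = cq C n x (pad C n y)) /\
  (forall n x (y z : 'I_n -> cc C),
                 cq C n (cq C n x y) z = cq C n x (fun i => cq C n (y i) z)) /\
  (forall n (f : sym tau) (x : 'I_(ar f) -> cc C) (y : 'I_n -> cc C),
                 cq C n (cop C f x) y = cop C f (fun j => cq C n (x j) y)).

Definition reduct (tau : sig) (C : cloneAlg tau) : algebra tau := @Alg tau (cc C) (cop C).

Definition prodC (tau : sig) (C D : cloneAlg tau) : cloneAlg tau :=
  @CloneAlg tau (cc C * cc D)%type
    (fun f x => (cop C f (fun i => (x i).1), cop D f (fun i => (x i).2)))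
    (fun n a y => (cq C n a.1 (fun i => (y i).1), cq D n a.2 (fun i => (y i).2)))
    (fun i => (ce C i, ce D i)).

Definition minimal (tau : sig) (C : cloneAlg tau) : Prop :=
  forall P : cc C -> Prop,
    (forall i, P (ce C i)) ->
    (forall f (x : 'I_(ar f) -> cc C), (forall j, P (x j)) -> P (cop C f x)) ->
    forall a, P a.

(* a is independent of e_n (n >= 1, 1-indexed):
   q_n(a, e_1, ..., e_(n-1), e_(n+1)) = a. *)
Definition indep_of (tau : sig) (C : cloneAlg tau) (a : cc C) (n : nat) : Prop :=
  cq C n a (fun i : 'I_n => ce C (if val i == n.-1 then n else val i)) = a.
Arguments indep_of {tau} C a n.

Definition dim_le (tau : sig) (C : cloneAlg tau) (a : cc C) (k : nat) : Prop :=
  forall n, k < n -> indep_of C a n.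
Arguments dim_le {tau} C a k.

Definition representable (tau : sig) (C : cloneAlg tau) (k : nat)
  (f : ('I_k -> cc C) -> cc C) : Prop :=
  dim_le C (f (fun i => ce C i)) k /\
  forall a : 'I_k -> cc C, f a = cq C k (f (fun i => ce C i)) a.
Arguments representable {tau} C {k} f.

(* The elements e_i of a clone algebra X freely generate its tau-reduct: by (C1)
   and (C6), q_N(s(e), v) = s(v) for every term s in the first N variables, so an
   identity holds in X_tau as soon as it holds at e, and minimality says that every
   element is some s(e).  Hence E = C x D is minimal iff (e_1, e_2) = s(e) for a
   term s, iff s(v_1, v_2, ...) is v_1 in C and v_2 in D, which is independence.
   Every term operation s is representable, as s(a) = q_k(s(e), a).  Conversely, if
   a = s(e) has dimension <= k, then q_N(a, -) ignores all coordinates beyond k, so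
   q_k(a, -) is the term operation of s with those variables identified.  Since
   q_2((e_1, e_2), -) is representable, Clo E_tau = R_E again yields a term with
   value (e_1, e_2) at e.  Finally, E_tau satisfies exactly the identities common to
   C_tau and D_tau, and an independence term t splits every B in the join of the two
   varieties as B ~ t(B, c) x t(c, B), for any c in B: the factors are retracts of B
   satisfying the identities of C_tau and of D_tau respectively. *)

From mathcomp Require Import all_boot zify.
From Stdlib Require Import FunctionalExtensionality ProofIrrelevance Classical.

Set Implicit Arguments.
Unset Strict Implicit.
Unset Printing Implicit Defensive.

Canonical reduct.

Section Terms.
Variable tau : sig.

Fixpoint subst (X Y : Type) (s : X -> term tau Y) (t : term tau X) : term tau Y :=
  match t with
  | TVar x => s x
  | TApp f args => TApp f (fun i => subst s (args i))
  end.

Lemma eval_subst (A : algebra tau) X Y (v : Y -> A) (s : X -> term tau Y) t :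
  eval v (subst s t) = eval (fun x => eval v (s x)) t.
Proof.
elim: t => [x|f args IH] //=.
by congr (op A f); apply: functional_extensionality => i.
Qed.

Lemma eval_hom (A B : algebra tau) (h : A -> B) :
  (forall f (args : 'I_(ar f) -> A), h (op A f args) = op B f (fun i => h (args i))) ->
  forall X (v : X -> A) t, h (eval v t) = eval (fun x => h (v x)) t.
Proof.
move=> hh X v; elim=> [x|f args IH] //=.
by rewrite hh; congr (op B f); apply: functional_extensionality => i.
Qed.

Lemma eval_prod (A1 A2 : algebra tau) X (v : X -> prod_alg A1 A2) t :
  eval v t = (eval (fun x => (v x).1) t, eval (fun x => (v x).2) t).
Proof.
elim: t => [x|f args IH] /=; first by case: (v x).
by congr pair; congr (op _ f); apply: functional_extensionality => i; rewrite IH.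
Qed.

Fixpoint var_bound (t : term tau nat) : nat :=
  match t with
  | TVar x => x.+1
  | TApp f args => \max_(i < ar f) var_bound (args i)
  end.

Lemma eq_eval_bound (A : algebra tau) (v w : nat -> A) t :
  (forall j, j < var_bound t -> v j = w j) -> eval v t = eval w t.
Proof.
elim: t => [x|f args IH] /= vw; first exact: vw.
congr (op A f); apply: functional_extensionality => i; apply: IH => j ji.
by apply: vw; apply: leq_trans ji _; apply: (leq_bigmax (F := fun i => var_bound (args i))).
Qed.

End Terms.

Section TermOperations.
Variables (tau : sig) (A : algebra tau).

Lemma snoc_restr (T : Type) k (v : nat -> T) :
  snoc (fun i : 'I_k => v i) (v k) = (fun i : 'I_k.+1 => v i).
Proof.
apply: functional_extensionality => i; rewrite /snoc.
by case: unliftP => [j ->|->]; rewrite ?lift_max.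
Qed.

Lemma Clo_term k (f : ('I_k -> A) -> A) :
  Clo A f -> exists s : term tau nat, forall v : nat -> A, f (fun i => v i) = eval v s.
Proof.
elim=> {k f} [k i | f | n k g h _ [sg gs] _ hs | k g f _ [sg gs] fg].
- by exists (TVar (val i)).
- by exists (TApp f (fun i => TVar (val i))).
- have [sh {}hs] := fin_all_exists hs.
  exists (subst (fun j => if insub j is Some i then sh i else TVar j) sg) => v.
  by rewrite eval_subst -gs; congr g; apply: functional_extensionality => i; rewrite valK hs.
- by exists sg => v; rewrite (fg _ (v k)) snoc_restr gs.
Qed.

Lemma term_Clo m (t : term tau 'I_m) : Clo A (fun a => eval a t).
Proof.
elim: t => [i|f args IH]; first exact: Clo_proj.
exact: Clo_comp (Clo_basic A f) IH.
Qed.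

End TermOperations.

Section BinaryTerms.
Variable tau : sig.

Definition binop (A : algebra tau) (t : term tau bool) (a b : A) : A :=
  eval (fun x : bool => if x then b else a) t.

Definition bsubst X (t : term tau bool) (s s' : term tau X) : term tau X :=
  subst (fun x : bool => if x then s' else s) t.

Definition swap_term (t : term tau bool) : term tau bool := bsubst t (TVar true) (TVar false).

Lemma binop_eta (A : algebra tau) t (w : bool -> A) : eval w t = binop t (w false) (w true).
Proof. by congr eval; apply: functional_extensionality; case. Qed.

Lemma eval_bsubst (A : algebra tau) X (v : X -> A) t s s' :
  eval v (bsubst t s s') = binop t (eval v s) (eval v s').
Proof. by rewrite eval_subst binop_eta. Qed.

Lemma binop_swap (A : algebra tau) t (a b : A) : binop (swap_term t) a b = binop t b a.
Proof. exact: eval_bsubst. Qed.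

Lemma binop_prod (A1 A2 : algebra tau) t (a1 b1 : A1) (a2 b2 : A2) :
  binop (A := prod_alg A1 A2) t (a1, a2) (b1, b2) = (binop t a1 b1, binop t a2 b2).
Proof.
by rewrite /binop eval_prod; congr pair; congr eval; apply: functional_extensionality; case.
Qed.

End BinaryTerms.

Section Varieties.
Variable tau : sig.
Implicit Types A B : algebra tau.

Lemma independent_VarP A1 A2 :
  independent (Var A1) (Var A2) <->
  exists t : term tau bool,
    (forall a b : A1, binop t a b = a) /\ (forall a b : A2, binop t a b = b).
Proof.
split=> [[t [t1 t2]] | [t [t1 t2]]].
  by exists t; split=> a b; [apply: (t1 A1) | apply: (t2 A2)].
suff side A (x : bool) : (forall a b : A, binop t a b = if x then b else a) ->
    csat (Var A) t (TVar x).
  by exists t; split; [apply: (side _ false t1) | apply: (side _ true t2)].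
move=> tA B VB w; rewrite binop_eta.
have nt_sat : sat A (bsubst t (TVar 0) (TVar 1)) (TVar (nat_of_bool x)).
  by move=> v; rewrite eval_bsubst tA; case: (x).
by have := VB (_, _) nt_sat (fun n => w (n != 0)); rewrite eval_bsubst; case: (x).
Qed.

Lemma sat_prod A1 A2 X (s s' : term tau X) :
  sat A1 s s' -> sat A2 s s' -> sat (prod_alg A1 A2) s s'.
Proof. by move=> s1 s2 v; rewrite !eval_prod s1 s2. Qed.

Lemma sat_prod_l A1 A2 (a2 : A2) X (s s' : term tau X) :
  sat (prod_alg A1 A2) s s' -> sat A1 s s'.
Proof. by move=> s12 v; have := s12 (fun x => (v x, a2)); rewrite !eval_prod => -[]. Qed.

Lemma sat_prod_r A1 A2 (a1 : A1) X (s s' : term tau X) :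
  sat (prod_alg A1 A2) s s' -> sat A2 s s'.
Proof. by move=> s12 v; have := s12 (fun x => (a1, v x)); rewrite !eval_prod => -[]. Qed.

Lemma iso_sat A B X (s s' : term tau X) : iso A B -> sat B s s' -> sat A s s'.
Proof.
case=> h [g [hK [gK hop]]] sB v.
by rewrite -(hK (eval v s)) -(hK (eval v s')) !(eval_hom hop) sB.
Qed.

Lemma Var_prod_alg A1 A2 (a1 : A1) (a2 : A2) :
  same_class (Var (prod_alg A1 A2)) (joinV (Var A1) (Var A2)).
Proof.
move=> B; split=> VB st st_sat; apply: VB.
  by apply: sat_prod; apply: st_sat; [left | right].
by move=> B' [] VB'; apply: VB'; [exact: (sat_prod_l a2 st_sat) | exact: (sat_prod_r a1 st_sat)].
Qed.

Lemma prodV_sub_joinV (V1 V2 : aclass tau) B : prodV V1 V2 B -> joinV V1 V2 B.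
Proof.
case=> A1 [A2 [V1A [V2A AA]]] st st_sat.
by apply: iso_sat AA _; apply: sat_prod; apply: st_sat; [left | right].
Qed.

Lemma empty_prodV A1 A2 B : ~ inhabited B -> prodV (Var A1) (Var A2) B.
Proof.
move=> B0; have VB A : Var A B by move=> st _ v; case: B0; constructor; exact: v 0.
exists B, B; do 2!split=> //; exists (fun b => (b, b)), fst; do 2!split=> //.
by case=> b; case: B0; constructor.
Qed.

End Varieties.

Lemma minimal_termP (tau : sig) (X : cloneAlg tau) :
  minimal X <-> forall a, exists s : term tau nat, eval (ce X) s = a.
Proof.
split=> [mX | gen P Pe Pop a].
  apply: mX => [i | f x xs]; first by exists (TVar i).
  have [s {}xs] := fin_all_exists xs.
  by exists (TApp f s) => /=; congr (cop X f); apply: functional_extensionality.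
have [s <-] := gen a; elim: s => [i | f s IH] /=; [exact: Pe | exact: Pop].
Qed.

Section CloneAlgebra.
Variables (tau : sig) (X : cloneAlg tau).
Hypothesis HX : is_clone X.

Lemma cq_ce n (x : 'I_n -> cc X) (i : 'I_n) : cq X n (ce X i) x = x i.
Proof. by case: HX. Qed.

Lemma cq_ce_lt n (x : 'I_n -> cc X) j (jn : j < n) : cq X n (ce X j) x = x (Ordinal jn).
Proof. exact: (cq_ce x (Ordinal jn)). Qed.

Lemma cq_ce_ge n (x : 'I_n -> cc X) j : n <= j -> cq X n (ce X j) x = ce X j.
Proof. by case: HX => _ [C2 _]; apply: C2. Qed.

Lemma cq_id n (x : cc X) : cq X n x (fun i => ce X i) = x.
Proof. by case: HX => _ [_ [C3 _]]. Qed.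

Lemma cq_pad k n (x : cc X) (y : 'I_k -> cc X) : k < n -> cq X k x y = cq X n x (pad X n y).
Proof. by case: HX => _ [_ [_ [C4 _]]]; apply: C4. Qed.

Lemma cqA n x (y z : 'I_n -> cc X) : cq X n (cq X n x y) z = cq X n x (fun i => cq X n (y i) z).
Proof. by case: HX => _ [_ [_ [_ [C5 _]]]]. Qed.

Lemma cq_eval N (v : nat -> cc X) (y : 'I_N -> cc X) t :
  cq X N (eval v t) y = eval (fun j => cq X N (v j) y) t.
Proof.
case: HX => _ [_ [_ [_ [_ C6]]]].
elim: t => [x|f args IH] //=.
by rewrite C6; congr (cop X f); apply: functional_extensionality => i.
Qed.

Lemma eval_cq N (v : nat -> cc X) t : var_bound t <= N ->
  eval v t = cq X N (eval (ce X) t) (fun i : 'I_N => v i).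
Proof.
move=> tN; rewrite cq_eval; apply: eq_eval_bound => j jt.
by rewrite (cq_ce_lt _ (leq_trans jt tN)).
Qed.

Lemma sat_eval_ce (s s' : term tau nat) :
  eval (ce X) s = eval (ce X) s' -> sat (reduct X) s s'.
Proof.
move=> ss' v; pose N := maxn (var_bound s) (var_bound s').
by rewrite (@eval_cq N _ s (leq_maxl _ _)) (@eval_cq N _ s' (leq_maxr _ _)) ss'.
Qed.

Lemma cq_indep x n N (y y' : 'I_N -> cc X) : 0 < n <= N -> indep_of X x n ->
  (forall i : 'I_N, val i != n.-1 -> y i = y' i) -> cq X N x y = cq X N x y'.
Proof.
case/andP=> n0 nN xn yy'.
pose u (i : 'I_N) := ce X (if val i == n.-1 then n else val i).
have xu : cq X N x u = x.
  move: nN; rewrite leq_eqVlt => /orP[/eqP nN | nN]; first by subst N.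
  rewrite -[in RHS]xn (cq_pad _ _ nN); congr (cq X N x).
  apply: functional_extensionality => i; rewrite /pad /u.
  case: insubP => [j _ <- // | /negbTE ni].
  by rewrite ifF //; apply/eqP; lia.
rewrite -xu !cqA; congr (cq X N x); apply: functional_extensionality => i.
rewrite /u; case: eqP => [_ | /eqP ni]; last by rewrite !cq_ce yy'.
have [nN' | Nn] := ltnP n N; last by rewrite !cq_ce_ge.
by rewrite !(cq_ce_lt _ nN') yy' //=; lia.
Qed.

Lemma cq_dim_le x k N (y y' : 'I_N -> cc X) : dim_le X x k ->
  (forall i : 'I_N, i < k -> y i = y' i) -> cq X N x y = cq X N x y'.
Proof.
move=> xk; move: y y'.
suff agree_from m : k <= m -> forall y y' : 'I_N -> cc X,
    (forall i : 'I_N, i < m -> y i = y' i) -> cq X N x y = cq X N x y'.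
  exact: agree_from.
(* Change the coordinates m, m + 1, ..., N - 1 one at a time, using cq_indep. *)
move Nm: (N - m) => d; elim: d m Nm => [|d IH] m Nm km y y' yy'.
  congr (cq X N x); apply: functional_extensionality => i; apply: yy'.
  by have := ltn_ord i; lia.
pose z (i : 'I_N) := if val i == m then y' i else y i.
transitivity (cq X N x z).
  apply: (@cq_indep _ m.+1); [apply/andP; split; lia | apply: xk; lia |].
  by move=> i; rewrite /z /=; case: eqP.
apply: (IH m.+1); [lia | lia |] => i; rewrite /z ltnS leq_eqVlt.
by case: eqP => // _ /yy'.
Qed.

Lemma Clo_representable k (f : ('I_k -> cc X) -> cc X) :
  Clo (reduct X) f -> representable X f.
Proof.
case/Clo_term=> s fs; have fe := fs (ce X).
split=> [n kn | a]; last first.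
  by rewrite fe cq_eval -fs; congr f; apply: functional_extensionality => i; rewrite cq_ce.
rewrite /indep_of fe cq_eval -fs -fe; congr f; apply: functional_extensionality => i.
by rewrite (cq_ce_lt _ (ltn_trans (ltn_ord i) kn)) /= ifF //; apply/eqP; have := ltn_ord i; lia.
Qed.

Lemma representable_Clo k (f : ('I_k -> cc X) -> cc X) :
  minimal X -> representable X f -> Clo (reduct X) f.
Proof.
move=> /minimal_termP mX [fk fq]; have [s fe] := mX (f (fun i => ce X i)).
(* The extra variable k, removed again by Clo_restr, makes this work for k = 0. *)
pose r j : 'I_k.+1 := inord (minn j k).
apply: (Clo_restr (term_Clo (reduct X) (subst (fun j => TVar (r j)) s))) => a b.
pose N := var_bound s.
rewrite eval_subst fq -fe cq_eval (@eval_cq N _ s) // [RHS](@eval_cq N) //.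
have sk : dim_le X (eval (ce X) s) k by rewrite fe.
apply: (cq_dim_le sk) => i ik; rewrite (cq_ce_lt _ ik) /= /snoc.
case: unliftP => [j rj | /(congr1 (@nat_of_ord _))]; last by rewrite /= inordK; lia.
congr a; apply: val_inj => /=; move/(congr1 (@nat_of_ord _)): rj.
by rewrite lift_max /= inordK; lia.
Qed.

Lemma representable_cq k x : dim_le X x k -> representable X (cq X k x).
Proof. by move=> xk; rewrite /representable cq_id; split=> // a; rewrite cq_id. Qed.

Lemma dim_le_ce j k : j < k -> dim_le X (ce X j) k.
Proof.
move=> jk n kn; rewrite /indep_of (cq_ce_lt _ (ltn_trans jk kn)) /= ifF //.
by apply/eqP; lia.
Qed.

End CloneAlgebra.

Section Retract.
Variables (tau : sig) (B : algebra tau) (m : B -> B).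
Hypothesis m_idem : forall b, m (m b) = m b.

(* When m is compatible with the operations (m_op below), this is the quotient of
   B by the kernel of m, represented by the fixed points of m. *)
Definition retract_alg : algebra tau :=
  @Alg tau {b : B | m b = b}
    (fun f x => exist _ (m (op B f (fun i => sval (x i)))) (m_idem _)).

Lemma retract_val_inj : injective (sval : retract_alg -> B).
Proof. by move=> x y; apply: eq_sig_hprop => b; apply: proof_irrelevance. Qed.

Hypothesis m_op : forall f (a : 'I_(ar f) -> B), m (op B f (fun i => m (a i))) = m (op B f a).

Lemma retract_sat (s s' : term tau nat) :
  (forall w : nat -> B, m (eval w s) = m (eval w s')) -> sat retract_alg s s'.
Proof.
have val_eval (v : nat -> retract_alg) t : sval (eval v t) = m (eval (fun x => sval (v x)) t).
  elim: t => [x|f args IH] /=; first by rewrite (svalP (v x)).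
  by rewrite -[in RHS]m_op; congr (m (op B f _)); apply: functional_extensionality => i.
by move=> ss' v; apply: retract_val_inj; rewrite !val_eval.
Qed.

End Retract.

Section RetractProduct.
Variables (tau : sig) (B : algebra tau) (m1 m2 : B -> B) (p : B -> B -> B).
Hypotheses (m1_idem : forall b, m1 (m1 b) = m1 b) (m2_idem : forall b, m2 (m2 b) = m2 b).
Hypotheses (m1_op : forall f (a : 'I_(ar f) -> B), m1 (op B f (fun i => m1 (a i))) = m1 (op B f a))
           (m2_op : forall f (a : 'I_(ar f) -> B), m2 (op B f (fun i => m2 (a i))) = m2 (op B f a)).
Hypotheses (p_split : forall b, p (m1 b) (m2 b) = b)
           (m1_p : forall a1 a2, m1 (p a1 a2) = m1 a1) (m2_p : forall a1 a2, m2 (p a1 a2) = m2 a2).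

Lemma iso_retract_prod : iso B (prod_alg (retract_alg m1_idem) (retract_alg m2_idem)).
Proof.
exists (fun b => (exist (fun a => m1 a = a) (m1 b) (m1_idem b),
                 exist (fun a => m2 a = a) (m2 b) (m2_idem b))).
exists (fun q => p (sval q.1) (sval q.2)).
split=> [b | ]; first exact: p_split.
split=> [[[a1 e1] [a2 e2]] | f args] /=; congr pair; apply: retract_val_inj => /=.
- by rewrite m1_p.
- by rewrite m2_p.
- by rewrite m1_op.
- by rewrite m2_op.
Qed.

End RetractProduct.

Section DecompositionLeft.
Variables (tau : sig) (A1 A2 B : algebra tau) (t : term tau bool).
Hypotheses (t1 : forall a b : A1, binop t a b = a) (t2 : forall a b : A2, binop t a b = b).
Hypothesis satB : forall s s' : term tau nat, sat A1 s s' -> sat A2 s s' -> sat B s s'.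

Lemma binop_idem (a : B) : binop t a a = a.
Proof.
have := satB (s := bsubst t (TVar 0) (TVar 0)) (s' := TVar 0) _ _ (fun=> a).
by rewrite eval_bsubst; apply=> v; rewrite eval_bsubst ?t1 ?t2.
Qed.

Lemma binop_congl (s s' : term tau nat) : sat A1 s s' ->
  forall (w : nat -> B) b, binop t (eval w s) b = binop t (eval w s') b.
Proof.
move=> ss' w b; pose shift (r : term tau nat) := subst (fun j => TVar j.+1) r.
have := satB (s := bsubst t (shift s) (TVar 0)) (s' := bsubst t (shift s') (TVar 0)) _ _
  (fun j => if j is j'.+1 then w j' else b).
rewrite !eval_bsubst !eval_subst; apply=> v; rewrite !eval_bsubst ?t2 // !t1 !eval_subst.
exact: ss'.
Qed.

Lemma binop_absorbl (a b d : B) : binop t (binop t a b) d = binop t a d.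
Proof.
have := binop_congl (s := bsubst t (TVar 0) (TVar 1)) (s' := TVar 0) _
  (fun j => if j is 0 then a else b) d.
by rewrite eval_bsubst; apply=> v; rewrite eval_bsubst t1.
Qed.

Lemma binop_opl f (a : 'I_(ar f) -> B) d :
  binop t (op B f (fun i => binop t (a i) d)) d = binop t (op B f a) d.
Proof.
have [w [wa wd]] : exists w : nat -> B, (forall i : 'I_(ar f), w i = a i) /\ w (ar f) = d.
  exists (fun j => if insub j is Some i then a i else d).
  by split=> [i|]; rewrite ?valK ?insubF ?ltnn.
have := binop_congl (s := TApp f (fun i => bsubst t (TVar (i : nat)) (TVar (ar f))))
  (s' := TApp f (fun i => TVar (i : nat))) _ w d; rewrite /=.
have -> : (fun i : 'I_(ar f) => eval w (bsubst t (TVar (i : nat)) (TVar (ar f)))) =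
          (fun i => binop t (a i) d).
  by apply: functional_extensionality => i; rewrite eval_bsubst /= wa wd.
have -> : (fun i : 'I_(ar f) => w i) = a by apply: functional_extensionality.
apply=> v /=; congr (op A1 f); apply: functional_extensionality => i.
by rewrite eval_bsubst t1.
Qed.

End DecompositionLeft.

Section DecompositionRight.
Variables (tau : sig) (A1 A2 B : algebra tau) (t : term tau bool).
Hypotheses (t1 : forall a b : A1, binop t a b = a) (t2 : forall a b : A2, binop t a b = b).
Hypothesis satB : forall s s' : term tau nat, sat A1 s s' -> sat A2 s s' -> sat B s s'.

Let swap_t2 (a b : A2) : binop (swap_term t) a b = a.
Proof. by rewrite binop_swap t2. Qed.

Let swap_t1 (a b : A1) : binop (swap_term t) a b = b.
Proof. by rewrite binop_swap t1. Qed.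

Let swap_satB s s' (s2 : sat A2 s s') (s1 : sat A1 s s') : sat B s s' := satB s1 s2.

Lemma binop_congr (s s' : term tau nat) : sat A2 s s' ->
  forall (w : nat -> B) b, binop t b (eval w s) = binop t b (eval w s').
Proof.
by move=> ss' w b; have := binop_congl swap_t2 swap_t1 swap_satB ss' w b; rewrite !binop_swap.
Qed.

Lemma binop_absorbr (a b d : B) : binop t d (binop t a b) = binop t d b.
Proof. by have := binop_absorbl swap_t2 swap_t1 swap_satB b a d; rewrite !binop_swap. Qed.

Lemma binop_opr f (a : 'I_(ar f) -> B) d :
  binop t d (op B f (fun i => binop t d (a i))) = binop t d (op B f a).
Proof.
have := binop_opl swap_t2 swap_t1 swap_satB a d.
have -> : (fun i => binop (swap_term t) (a i) d) = (fun i => binop t d (a i)).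
  by apply: functional_extensionality => i; rewrite binop_swap.
by rewrite !binop_swap.
Qed.

End DecompositionRight.

Lemma joinV_sub_prodV (tau : sig) (A1 A2 B : algebra tau) :
  independent (Var A1) (Var A2) -> joinV (Var A1) (Var A2) B -> prodV (Var A1) (Var A2) B.
Proof.
case/independent_VarP=> t [t1 t2] jB.
have satB (s s' : term tau nat) : sat A1 s s' -> sat A2 s s' -> sat B s s'.
  by move=> s1 s2; apply: (jB (s, s')) => B' [] VB'; apply: VB'.
have [[c] | /empty_prodV //] := classic (inhabited B).
have absl := binop_absorbl t1 t2 satB; have absr := binop_absorbr t1 t2 satB.
have m1_idem b : binop t (binop t b c) c = binop t b c by apply: absl.
have m2_idem b : binop t c (binop t c b) = binop t c b by apply: absr.
exists (retract_alg m1_idem), (retract_alg m2_idem); split; [|split].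
- move=> [s s'] /= s1; apply: retract_sat => [f a | w].
    exact: (binop_opl t1 t2 satB).
  exact: (binop_congl t1 t2 satB s1).
- move=> [s s'] /= s2; apply: retract_sat => [f a | w].
    exact: (binop_opr t1 t2 satB).
  exact: (binop_congr t1 t2 satB s2).
apply: (iso_retract_prod (p := binop t)) => [f a | f a | b | a1 a2 | a1 a2].
- exact: (binop_opl t1 t2 satB).
- exact: (binop_opr t1 t2 satB).
- by rewrite absl absr (binop_idem t1 t2 satB).
- exact: absl.
- exact: absr.
Qed.

Section ProductClone.
Variables (tau : sig) (C D : cloneAlg tau).
Hypotheses (HC : is_clone C) (HD : is_clone D).

Lemma prodC_clone : is_clone (prodC C D).
Proof.
case: HC => C1 [C2 [C3 [C4 [C5 C6]]]]; case: HD => D1 [D2 [D3 [D4 [D5 D6]]]].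
split; [|split; [|split; [|split; [|split]]]] => /=.
- by move=> n x i; rewrite C1 D1; case: (x i).
- by move=> n x j nj; rewrite C2 ?D2.
- by move=> n [a b]; rewrite /= C3 D3.
- move=> k n x y kn; rewrite (C4 _ _ _ _ kn) (D4 _ _ _ _ kn).
  by congr pair; congr cq; apply: functional_extensionality => i; rewrite /pad; case: insub.
- by move=> n x y z; rewrite /= C5 D5.
- by move=> n f x y; rewrite /= C6 D6.
Qed.

Lemma dim_le_prodC (a : cc C) (b : cc D) k :
  dim_le C a k -> dim_le D b k -> dim_le (prodC C D) (a, b) k.
Proof. by move=> ak bk n kn; rewrite /indep_of /= (ak n kn) (bk n kn). Qed.

Lemma independent_of_pair_term :
  (exists s, eval (ce (prodC C D)) s = (ce C 0, ce D 1)) ->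
  independent (Var (reduct C)) (Var (reduct D)).
Proof.
case=> s; rewrite eval_prod => -[sC sD].
apply/independent_VarP; exists (subst (fun j => TVar (j != 0)) s).
split=> a b; rewrite /binop eval_subst.
- by rewrite (sat_eval_ce HC (s' := TVar 0) sC).
- by rewrite (sat_eval_ce HD (s' := TVar 1) sD).
Qed.

Lemma minimal_prodC_independent :
  minimal (prodC C D) -> independent (Var (reduct C)) (Var (reduct D)).
Proof. by move=> /minimal_termP/(_ (ce C 0, ce D 1)); apply: independent_of_pair_term. Qed.

Lemma Clo_representable_independent :
  (forall k (f : ('I_k -> cc (prodC C D)) -> cc (prodC C D)),
      Clo (reduct (prodC C D)) f <-> representable (prodC C D) f) ->
  independent (Var (reduct C)) (Var (reduct D)).
Proof.
move=> CloR; have HE := prodC_clone.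
pose x : cc (prodC C D) := (ce C 0, ce D 1).
have x2 : dim_le (prodC C D) x 2 by apply: dim_le_prodC; apply: dim_le_ce.
have [s xs] := Clo_term ((CloR 2 _).2 (representable_cq HE x2)).
by apply: independent_of_pair_term; exists s; rewrite -xs (cq_id HE).
Qed.

End ProductClone.

Lemma independent_minimal_prodC (tau : sig) (C D : cloneAlg tau) :
  minimal C -> minimal D -> independent (Var (reduct C)) (Var (reduct D)) ->
  minimal (prodC C D).
Proof.
move=> /minimal_termP gC /minimal_termP gD /independent_VarP [t [t1 t2]].
apply/minimal_termP => -[a b]; have [[sa <-] [sb <-]] := (gC a, gD b).
by exists (bsubst t sa sb); rewrite eval_bsubst !eval_prod binop_prod t1 t2.
Qed.

Theorem theorem11p17 (tau : sig) (C D : cloneAlg tau) :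
  is_clone C -> is_clone D -> minimal C -> minimal D ->
  ((minimal (prodC C D) <-> independent (Var (reduct C)) (Var (reduct D))) /\
   (independent (Var (reduct C)) (Var (reduct D)) <->
      (forall k (f : ('I_k -> cc (prodC C D)) -> cc (prodC C D)),
          Clo (reduct (prodC C D)) f <-> representable (prodC C D) f))) /\
  (minimal (prodC C D) ->
     same_class (Var (reduct (prodC C D))) (prodV (Var (reduct C)) (Var (reduct D))) /\
     same_class (prodV (Var (reduct C)) (Var (reduct D)))
                (joinV (Var (reduct C)) (Var (reduct D)))).
Proof.
move=> HC HD MC MD.
have minE : minimal (prodC C D) <-> independent (Var (reduct C)) (Var (reduct D)).
  by split; [apply: minimal_prodC_independent | apply: independent_minimal_prodC].
split; first split=> //.
  split=> [/minE ME k f | ]; last exact: Clo_representable_independent.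
  have HE := prodC_clone HC HD.
  by split; [apply: (Clo_representable HE) | apply: (representable_Clo HE ME)].
move=> /minE indep; have VarE := Var_prod_alg (ce C 0) (ce D 0).
split=> B; split.
- by move=> /VarE; apply: joinV_sub_prodV.
- by move=> /prodV_sub_joinV /VarE.
- exact: prodV_sub_joinV.
- exact: joinV_sub_prodV.
Qed.
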